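(* Let $\mathbb V,\mathbb W$ be separable Banach spaces, $\mathcal P_N^{\mathbb V},\mathcal P_N^{\mathbb W}$ finite-dimensional projections converging strongly to the identity on $\mathbb V,\mathbb W$, and let $\mathcal L=\mathcal L_0+\mathcal L_1$, $\mathcal N=\mathcal N_0+\mathcal N_1$, $\mathcal N_{1,N}$, $\mathcal K_N$, $\mathcal K$ satisfy all of the following: $\mathcal L:\mathbb V\to\mathbb W$ is admissible and invertible with invertible left-Fredholm regulator $\mathcal N$, $\mathcal N\mathcal L=\mathrm{id}-\mathcal K$ with $\mathcal K$ compact; $\mathcal N_{1,N}:\operatorname{ran}\mathcal P_N^{\mathbb W}\to\operatorname{ran}\mathcal P_N^{\mathbb V}$ and $\mathcal K_N:\mathbb V\to\mathbb V$ satisfy $(\mathcal N_0+\mathcal N_{1,N})(\mathcal L_0+\mathcal P_N^{\mathbb W}\mathcal L_1)=\mathrm{id}-\mathcal K_N$ on $\operatorname{ran}\mathcal P_N^{\mathbb V}$ and $\|\mathcal K_N-\mathcal K\|_{\mathbb V}\to0$; and $\dim\operatorname{ran}\mathcal P_N^{\mathbb V}=\dim\operatorname{ran}\mathcal P_N^{\mathbb W}$. Let $\mathbb W'\subset\mathbb W$ be a dense subspace and $\mathcal I_N^{\mathbb W}$ projections with $\|u-\mathcal I_N^{\mathbb W}u\|_{\mathbb W}\to0$ for every $u\in\mathbb W'$ and $\mathcal I_N^{\mathbb W}\mathbb W'=\operatorname{ran}\mathcal P_N^{\mathbb W}$. Suppose that, for sufficiently large $N$, $\mathcal L_0+\mathcal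 I_N^{\mathbb W}\mathcal L_1:\operatorname{ran}\mathcal P_N^{\mathbb V}\to\operatorname{ran}\mathcal P_N^{\mathbb W}$ is invertible. Then for $f\in\mathbb W'$ and such $N$, $$\|(\mathcal L_0+\mathcal P_N^{\mathbb W}\mathcal L_1)^{-1}\mathcal P_N^{\mathbb W}f-(\mathcal L_0+\mathcal I_N^{\mathbb W}\mathcal L_1)^{-1}\mathcal I_N^{\mathbb W}f\|_{\mathbb V}\le\|(\mathcal L_0+\mathcal I_N^{\mathbb W}\mathcal L_1)^{-1}\|_{\operatorname{ran}\mathcal I_N^{\mathbb W}\to\operatorname{ran}\mathcal P_N^{\mathbb V}}\,\|(\mathcal I_N^{\mathbb W}-\mathcal P_N^{\mathbb W})(f-\mathcal L_1u_N)\|_{\mathbb W},$$ where $u_N=(\mathcal L_0+\mathcal P_N^{\mathbb W}\mathcal L_1)^{-1}\mathcal P_N^{\mathbb W}f$.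
   Context: A bounded linear operator $\mathcal L:\mathbb V\to\mathbb W$ is left Fredholm with regulator $\mathcal N:\mathbb W\to\mathbb V$ if $\mathcal N\mathcal L=\mathrm{id}-\mathcal K$ with $\mathcal K$ compact on $\mathbb V$. It is admissible if $\mathcal L=\mathcal L_0+\mathcal L_1$ with $\mathcal L_0\mathcal P_N^{\mathbb V}=\mathcal P_N^{\mathbb W}\mathcal L_0$, $\mathcal L$ is left Fredholm with regulator $\mathcal N$, and $\mathcal N=\mathcal N_0+\mathcal N_1$ with $\mathcal N_0\mathcal P_N^{\mathbb W}=\mathcal P_N^{\mathbb V}\mathcal N_0$. *)

From HB Require Import structures.
From mathcomp Require Import all_boot all_order all_algebra.
From mathcomp Require Import all_classical all_reals all_analysis.
Set Implicit Arguments. Unset Strict Implicit. Unset Printing Implicit Defensive.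
Import Order.TTheory GRing.Theory Num.Theory.
Import numFieldNormedType.Exports.
Local Open Scope classical_set_scope.
Local Open Scope ring_scope.

(* Conventions: all spaces are (real) normed spaces over R : realType;
   operators are represented as total functions with explicit predicates. *)

Section Defs.
Variable R : realType.

Definition separable (V : normedModType R) : Prop :=
  exists D : set V, countable D /\ dense D.

Definition bounded_linear (V W : normedModType R) (T : V -> W) : Prop :=
  linear T /\ continuous T.

Definition lin_subspace (V : normedModType R) (S : set V) : Prop :=
  S 0 /\ forall (a : R) (x y : V), S x -> S y -> S (a *: x + y).

Definition opnorm_on (V W : normedModType R) (S : set V) (T : V -> W) : R :=
  sup [set r : R | exists2 x, S x /\ x != 0 & r = `|T x| / `|x|].

(* operator norm of the inverse of A : S -> T (A a bijection S -> T):
   sup over nonzero w in T of ||A^{-1} w|| / ||w||, written relationally *)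
Definition inv_opnorm (V W : normedModType R) (A : V -> W) (S : set V) (T : set W) : R :=
  sup [set r : R | exists x y, [/\ S x, T y, y != 0, A x = y & r = `|x| / `|y|]].

Definition compact_op (V W : normedModType R) (K : V -> W) : Prop :=
  bounded_linear K /\ compact (closure (K @` ball (0 : V) 1)).

Definition bij_between (V W : normedModType R) (A : V -> W) (S : set V) (T : set W) : Prop :=
  [/\ (forall x, S x -> T (A x)),
      (forall y, T y -> exists2 x, S x & A x = y) &
      (forall x y, S x -> S y -> A x = A y -> x = y)].

Definition basis_of (V : normedModType R) (S : set V) (n : nat) (b : 'I_n -> V) : Prop :=
  (forall c : 'I_n -> R, \sum_(i < n) c i *: b i = 0 -> forall i, c i = 0) /\
  S = [set \sum_(i < n) c i *: b i | c in [set: 'I_n -> R]].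

Definition finite_dim (V : normedModType R) (S : set V) : Prop :=
  exists n (b : 'I_n -> V), basis_of S b.

Definition same_dim (V W : normedModType R) (S : set V) (T : set W) : Prop :=
  exists n (b : 'I_n -> V) (b' : 'I_n -> W), basis_of S b /\ basis_of T b'.

Definition fd_proj_family (V : normedModType R) (P : nat -> V -> V) : Prop :=
  forall N, [/\ bounded_linear (P N), (forall x, P N (P N x) = P N x),
     finite_dim (range (P N)) & forall x, (fun M => P M x) @ \oo --> x].

Definition left_fredholm (V W : normedModType R) (L : V -> W) (Nr : W -> V) : Prop :=
  exists K : V -> V, compact_op K /\ forall x, Nr (L x) = x - K x.

Definition admissible (V W : normedModType R) (PV : nat -> V -> V) (PW : nat -> W -> W)
  (L L0 L1 : V -> W) (Nr N0 N1 : W -> V) : Prop :=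
  [/\ linear L0, linear L1, (forall x, L x = L0 x + L1 x) &
      (forall N x, L0 (PV N x) = PW N (L0 x))] /\
  left_fredholm L Nr /\
  [/\ linear N0, linear N1, (forall y, Nr y = N0 y + N1 y) &
      (forall N y, N0 (PW N y) = PV N (N0 y))].

End Defs.

From Pilot Require Import Defs.
From HB Require Import structures.
From mathcomp Require Import all_boot all_order all_algebra.
From mathcomp Require Import all_classical all_reals all_analysis.
From mathcomp Require Import lra.
Import Order.TTheory GRing.Theory Num.Theory.
Import numFieldNormedType.Exports.

(* Since [Nr] and [L] are injective, [id - K] is injective, and as [K] is
   compact it is bounded below, [c |x| <= |x - K x|] (Riesz).  Once
   [|K_N - K| < c / 2], the truncated identity
   [(N0 + N1_N) (L0 + P_N L1) = id - K_N] makes [L0 + P_N L1] injective on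
   [ran P_N^V], hence bijective onto [ran P_N^W], the two spaces having the
   same dimension.  For the estimate, the two discrete solutions satisfy
   [(L0 + I_N L1) (v - u_N) = (I_N - P_N) (f - L1 u_N)], and an injective
   linear map on a finite-dimensional space is bounded below, so the
   supremum defining the inverse norm is finite and bounds [|u_N - v|]. *)

Local Open Scope classical_set_scope.
Local Open Scope ring_scope.

Section LinearMaps.
Context {R : realType} {V W : normedModType R} {f : V -> W} (lf : linear f).

Let lin : {linear V -> W} := HB.pack f (GRing.isLinear.Build _ _ _ _ _ lf).

Lemma lin0 : f 0 = 0. Proof. exact: linear0 lin. Qed.
Lemma linD u v : f (u + v) = f u + f v. Proof. exact: (raddfD lin u v). Qed.
Lemma linB u v : f (u - v) = f u - f v. Proof. exact: (raddfB lin u v). Qed.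
Lemma linZ a u : f (a *: u) = a *: f u. Proof. exact: (linearZ_LR lin a u). Qed.
Lemma lin_sum n (F : 'I_n -> V) : f (\sum_(i < n) F i) = \sum_(i < n) f (F i).
Proof. exact: (raddf_sum lin). Qed.

Lemma continuous_linear_norm_le : continuous f -> exists C, forall x, `|f x| <= C * `|x|.
Proof.
move=> /(linear_bounded_continuous lin).2 /(linear_boundedP lin) [M [_ HM]].
by exists (M + 1); apply: HM; rewrite ltrDl.
Qed.

Lemma opnorm_on_setT_le : continuous f -> forall x, `|f x| <= opnorm_on setT f * `|x|.
Proof.
move=> /continuous_linear_norm_le [C HC] x.
have [->|x0] := eqVneq x 0; first by rewrite lin0 !normr0 mulr0.
rewrite -ler_pdivrMr ?normr_gt0 //; apply: ub_le_sup; last by exists x.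
by exists C => _ [y [_ y0] ->]; rewrite ler_pdivrMr ?normr_gt0.
Qed.

End LinearMaps.

Section Subspaces.
Context {R : realType} {V : normedModType R} {S : set V} (hS : lin_subspace S).

Lemma lin_subspace0 : S 0. Proof. exact: hS.1. Qed.

Lemma lin_subspaceD {x y} : S x -> S y -> S (x + y).
Proof. by move=> Sx Sy; rewrite -[x]scale1r; apply: hS.2. Qed.

Lemma lin_subspaceB {x y} : S x -> S y -> S (x - y).
Proof. by move=> Sx Sy; rewrite addrC -scaleN1r; apply: hS.2. Qed.

Lemma linear_inj_on {W : normedModType R} {A : V -> W} : linear A ->
  (forall w, S w -> A w = 0 -> w = 0) ->
  forall x y, S x -> S y -> A x = A y -> x = y.
Proof.
move=> lA ker0 x y Sx Sy Axy; apply/subr0_eq/ker0; first exact: lin_subspaceB.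
by rewrite (linB lA) Axy subrr.
Qed.

End Subspaces.

Lemma lin_subspace_range {R : realType} {V W : normedModType R} {f : V -> W} :
  linear f -> lin_subspace (range f).
Proof.
move=> lf; split; first by exists 0; rewrite ?(lin0 lf).
by move=> a _ _ [x _ <-] [y _ <-]; exists (a *: x + y); rewrite ?(linD lf) ?(linZ lf).
Qed.

Section LinearCombinations.
Context {R : realType} {V : normedModType R} {m : nat} (b : 'I_m -> V).

(* Coordinates are row vectors, so that the coordinate space is the normed
   space ['rV_m] and matrices act on it. *)
Definition lincomb (c : 'rV[R]_m) : V := \sum_i c 0 i *: b i.

Lemma lincomb_linear : linear lincomb.
Proof.
move=> a c d; rewrite /lincomb scaler_sumr -big_split /=.
by apply: eq_bigr => i _; rewrite !mxE scalerDl scalerA.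
Qed.

Lemma lincomb_norm_le c : `|lincomb c| <= (\sum_i `|b i|) * `|c|.
Proof.
apply: (le_trans (ler_norm_sum _ _ _)); rewrite mulr_suml; apply: ler_sum => i _.
rewrite normrZ mulrC ler_wpM2l // [`|c|]mx_normrE.
exact: (le_bigmax _ (fun ij : 'I_1 * 'I_m => `|c ij.1 ij.2|) (0, i)).
Qed.

End LinearCombinations.

Section FiniteDimensional.
Context {R : realType} {V : normedModType R} {S : set V} {m : nat}
  {b : 'I_m -> V} (hb : Defs.basis_of S b).

Lemma lincomb_in c : S (lincomb b c).
Proof. by rewrite hb.2; exists (fun i => c 0 i). Qed.

Lemma basis_lincombP x : S x -> exists c, x = lincomb b c.
Proof.
rewrite hb.2 => -[c _ <-]; exists (\row_i c i).
by apply: eq_bigr => i _; rewrite mxE.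
Qed.

Lemma lincomb_eq0 c : lincomb b c = 0 -> c = 0.
Proof. by move=> /hb.1 c0; apply/rowP => i; rewrite mxE (c0 i). Qed.

Lemma basis_of_lin_subspace : lin_subspace S.
Proof.
split; first by rewrite -(lin0 (lincomb_linear b)); exact: lincomb_in.
move=> a x y /basis_lincombP [c ->] /basis_lincombP [d ->].
by rewrite -(lincomb_linear b); exact: lincomb_in.
Qed.

Lemma basis_in i : S (b i).
Proof.
rewrite hb.2; exists (fun j => (j == i)%:R) => //.
rewrite (bigD1 i) //= eqxx scale1r big1 ?addr0 // => j /negbTE ->.
by rewrite scale0r.
Qed.

End FiniteDimensional.

Lemma rV_sphere_compact {R : realType} (m : nat) :
  compact [set c : 'rV[R]_m | `|c| = 1].
Proof.
apply: bounded_closed_compact.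
  by exists 1; split; [exact: num_real | move=> M M1 c /= ->; exact: ltW].
have -> : [set c : 'rV[R]_m | `|c| = 1] = (@Num.Def.normr R _) @^-1` [set 1] by [].
by apply: (continuous_closedP _).1; [exact: norm_continuous | exact: closed_eq].
Qed.

Lemma rV_sphere_ge {R : realType} (m : nat) (h : 'rV[R]_m -> R) :
  continuous h -> (forall c, `|c| = 1 -> 0 < h c) ->
  exists2 e, 0 < e & forall c, `|c| = 1 -> e <= h c.
Proof.
move=> ch hpos.
have [ne|empty] := pselect ([set c : 'rV[R]_m | `|c| = 1] !=set0); last first.
  by exists 1 => // c c1; exfalso; apply: empty; exists c.
have [c0 /set_mem c01 c0min] :=
  compact_EVT_min ne (rV_sphere_compact m) (continuous_subspaceT ch).
by exists (h c0); [exact: hpos | move=> c c1; apply: c0min; exact: mem_set].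
Qed.

Section FiniteDimensionalMaps.
Context {R : realType} {V W : normedModType R} {S : set V} {m : nat}
  {b : 'I_m -> V} (hb : Defs.basis_of S b) {A : V -> W} (lA : linear A)
  (injA : forall x y, S x -> S y -> A x = A y -> x = y).

Lemma linear_lincomb_eq0 c : A (lincomb b c) = 0 -> c = 0.
Proof.
move=> Ac0; apply: (lincomb_eq0 hb); apply: injA; first exact: (lincomb_in hb).
  exact: (lin_subspace0 (basis_of_lin_subspace hb)).
by rewrite Ac0 (lin0 lA).
Qed.

Lemma linear_lincomb_continuous : continuous (fun c => A (lincomb b c)).
Proof.
have -> : (fun c => A (lincomb b c)) = (fun c => \sum_i c 0 i *: A (b i)).
  by apply: funext => c; rewrite (lin_sum lA); under eq_bigr do rewrite (linZ lA).
apply: (continuous_big add_continuous) => i _ c.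
by apply: continuousZl; exact: coord_continuous.
Qed.

Lemma linear_inj_bounded_below : exists C, forall x, S x -> `|x| <= C * `|A x|.
Proof.
pose h c := `|A (lincomb b c)|.
have hZ a c : h (a *: c) = `|a| * h c.
  by rewrite /h (linZ (lincomb_linear b)) (linZ lA) normrZ.
have [e e0 he] : exists2 e, 0 < e & forall c, `|c| = 1 -> e <= h c.
  apply: rV_sphere_ge => [c|c c1].
    by apply: continuous_comp; [exact: linear_lincomb_continuous|exact: norm_continuous].
  rewrite normr_gt0; apply/eqP => /linear_lincomb_eq0 c0.
  by move: c1; rewrite c0 normr0 => /esym/eqP; rewrite oner_eq0.
exists ((\sum_i `|b i|) / e) => _ /(basis_lincombP hb) [c ->].
apply: (le_trans (lincomb_norm_le b c)); rewrite -mulrA.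
apply: ler_wpM2l; first exact: sumr_ge0.
have [->|c0] := eqVneq c 0; first by rewrite normr0 mulr_ge0 // invr_ge0 ltW.
have nc0 : 0 < `|c| by rewrite normr_gt0.
rewrite ler_pdivlMl // mulrC -ler_pdivlMl //.
suff : e <= h (`|c|^-1 *: c) by rewrite hZ normfV normr_id.
by apply: he; rewrite normrZ normfV normr_id mulVf ?gt_eqF.
Qed.

Context {T : set W} {b' : 'I_m -> W} (hb' : Defs.basis_of T b')
  (mapsA : forall x, S x -> T (A x)).

Lemma linear_lincomb_matrix : exists M : 'M[R]_m,
  forall c, A (lincomb b c) = lincomb b' (c *m M).
Proof.
have /choice [Mrow HM] : forall i, exists c, A (b i) = lincomb b' c.
  by move=> i; apply: (basis_lincombP hb'); apply/mapsA/(basis_in hb).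
exists (\matrix_(i, j) Mrow i 0 j) => c.
rewrite (lin_sum lA) /lincomb.
under eq_bigr do rewrite (linZ lA) HM scaler_sumr.
rewrite exchange_big /=; apply: eq_bigr => j _.
rewrite mxE scaler_suml; apply: eq_bigr => i _.
by rewrite mxE scalerA.
Qed.

Lemma linear_inj_surj y : T y -> exists2 x, S x & A x = y.
Proof.
have [M HM] := linear_lincomb_matrix.
have Mu : M \in unitmx.
  rewrite -row_free_unit; apply: inj_row_free => c cM0; apply: linear_lincomb_eq0.
  by rewrite HM cM0 /lincomb big1 // => j _; rewrite mxE scale0r.
move=> /(basis_lincombP hb') [d ->].
exists (lincomb b (d *m invmx M)); first exact: (lincomb_in hb).
by rewrite HM -mulmxA mulVmx // mulmx1.
Qed.

End FiniteDimensionalMaps.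

Section CompactPerturbation.
Context {R : realType} {V : normedModType R} {K : V -> V}.

Lemma fixed_point_of_approx_fixed : continuous K -> forall z,
  (forall e, 0 < e -> exists y, `|z - K y| < e /\ `|y - K y| < e) -> K z = z.
Proof.
move=> cK z approx; apply/eqP; rewrite eq_sym -subr_eq0 -normr_eq0.
rewrite eq_le normr_ge0 andbT leNgt; apply/negP => d0.
set d := `|z - K z| in d0 *.
have d3 : 0 < d / 3 by rewrite divr_gt0.
have /fcvgrPdist_lt /(_ _ d3) /nbhs_ballP [del del0 Hdel] := cK z.
have [y []] : exists y, `|z - K y| < Num.min (d / 3) (del / 2) /\
    `|y - K y| < Num.min (d / 3) (del / 2).
  by apply: approx; rewrite lt_min d3 divr_gt0.
rewrite !lt_min => /andP [zKy1 zKy2] /andP [_ yKy].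
have /Hdel /= KzKy : ball z del y.
  rewrite -ball_normE /= (le_lt_trans (ler_distD (K y) _ _)) //.
  by rewrite [`|K y - y|]distrC (splitr del) ltrD.
have : d < d.
  rewrite {1}/d (le_lt_trans (ler_distD (K y) _ _)) //.
  rewrite distrC in KzKy.
  by apply: (lt_le_trans (ltrD zKy1 KzKy)); lra.
by rewrite ltxx.
Qed.

Lemma not_bounded_below_seq : linear K ->
  ~ (exists2 c, 0 < c & forall x, c * `|x| <= `|x - K x|) ->
  exists y : nat -> V, forall k, `|y k| = 2^-1 /\ `|y k - K (y k)| < k.+1%:R^-1.
Proof.
move=> lK nbb.
suff /choice [y hy] : forall k : nat, exists x : V,
  `|x| = 2^-1 /\ `|x - K x| < k.+1%:R^-1 by exists y.
move=> k.
have /existsNP [x /negP] : ~ (forall x, k.+1%:R^-1 * `|x| <= `|x - K x|).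
  by move=> H; apply: nbb; exists k.+1%:R^-1; rewrite ?invr_gt0 ?ltr0n.
rewrite -ltNge => Hx.
have nx0 : 0 < `|x|.
  rewrite lt_def normr_ge0 andbT normr_eq0; apply: contraTneq Hx => ->.
  by rewrite (lin0 lK) subr0 !normr0 mulr0 ltxx.
pose s := (2 * `|x|)^-1.
have s0 : 0 < s by rewrite invr_gt0 mulr_gt0.
exists (s *: x); rewrite (linZ lK) -scalerBr !normrZ gtr0_norm //; split.
  by rewrite /s invfM -mulrA mulVf ?gt_eqF // mulr1.
apply: (@lt_trans _ _ (s * (k.+1%:R^-1 * `|x|))); first by rewrite ltr_pM2l.
rewrite mulrCA /s invfM -mulrA mulVf ?gt_eqF //.
by rewrite mulr1 gtr_pMr ?invr_gt0 ?ltr0n // invf_lt1 // ltr1n.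
Qed.

Lemma compact_op_bounded_below : compact_op K ->
  (forall x, x - K x = 0 -> x = 0) ->
  exists2 c, 0 < c & forall x, c * `|x| <= `|x - K x|.
Proof.
move=> [[lK cK] cpt] inj.
apply: contrapT => /(not_bounded_below_seq lK) [y hy].
(* A cluster point [z] of [K (y k)] is fixed by [K], hence [z = 0]; but then
   [y k] is close to [K (y k)], hence to [0], whereas [|y k| = 1/2]. *)
have [z [_ Cz]] : closure (K @` ball 0 1) `&` cluster ((fun k => K (y k)) @ \oo) !=set0.
  apply: cpt; exists 0%N => // k _; apply: subset_closure; exists (y k) => //.
  by rewrite -ball_normE /= sub0r normrN (proj1 (hy k)) invf_lt1 // ltr1n.
have approx e : 0 < e -> exists k, `|z - K (y k)| < e /\ `|y k - K (y k)| < e.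
  move=> e0; have [N _ HN] := near_infty_natSinv_lt (PosNum e0).
  have [_ [[k [Nk <-]] zKy]] :
      [set K (y k) | k in [set k | (N <= k)%N]] `&` ball z e !=set0.
    by apply: Cz; [exists N => // k; exists k | exact: nbhsx_ballx].
  exists k; split; first by rewrite -ball_normE in zKy.
  exact: lt_trans (proj2 (hy k)) (HN k Nk).
have z0 : z = 0.
  apply: inj; apply/eqP; rewrite subr_eq0 eq_sym; apply/eqP.
  by apply: fixed_point_of_approx_fixed => // e /approx [k ?]; exists (y k).
have [|k []] := approx 8^-1; first by rewrite invr_gt0.
rewrite z0 sub0r normrN => Ky yKy.
have : `|y k| < 2^-1.
  rewrite -[y k](subrK (K (y k))) (le_lt_trans (ler_normD _ _)) //.
  by apply: (lt_le_trans (ltrD yKy Ky)); lra.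
by rewrite (proj1 (hy k)) ltxx.
Qed.

End CompactPerturbation.

Lemma bounded_linear_subfun {R : realType} {V W : normedModType R} {f g : V -> W} :
  bounded_linear f -> bounded_linear g -> bounded_linear (fun x => f x - g x).
Proof.
move=> [lf cf] [lg cg]; split=> [a x y|x]; last exact: continuousB (cf x) (cg x).
rewrite (linD lf) (linD lg) (linZ lf) (linZ lg).
by rewrite scalerBr opprD addrACA.
Qed.

Lemma bounded_below_perturbation {R : realType} {V : normedModType R}
  {K K' : V -> V} {c d : R} {x : V} :
  c * `|x| <= `|x - K x| -> `|K' x - K x| <= d * `|x| ->
  (c - d) * `|x| <= `|x - K' x|.
Proof.
move=> hK hK'; have := ler_normD (x - K' x) (K' x - K x).
rewrite addrA subrK; lra.
Qed.

Lemma norm_le_inv_opnorm {R : realType} {V W : normedModType R}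
  (A : V -> W) (S : set V) (T : set W) (C : R) w :
  (forall x, S x -> `|x| <= C * `|A x|) -> S w -> T (A w) ->
  `|w| <= inv_opnorm A S T * `|A w|.
Proof.
move=> hC Sw TAw; have [Aw0|Awn0] := eqVneq (A w) 0.
  by have := hC w Sw; rewrite Aw0 !normr0 !mulr0.
rewrite -ler_pdivrMr ?normr_gt0 //; apply: ub_le_sup.
  exists C => _ [x [y [Sx _ y0 Axy ->]]]; rewrite -Axy in y0 *.
  by rewrite ler_pdivrMr ?normr_gt0 //; exact: hC.
by exists w, (A w).
Qed.

Section Truncation.
Context {R : realType} {V W : normedModType R} {L0 L1 : V -> W}
  (lL0 : linear L0) (lL1 : linear L1).

Lemma truncation_linear {P : W -> W} : linear P -> linear (fun u => L0 u + P (L1 u)).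
Proof.
move=> lP a u v; rewrite (linD lL0) (linZ lL0) (linD lL1) (linZ lL1).
by rewrite (linD lP) (linZ lP) scalerDr addrACA.
Qed.

Lemma truncation_kernel_trivial {P : W -> W} {Nt : W -> V} {K K' : V -> V}
  {S : set V} {c : R} :
  0 < c -> (forall x, c * `|x| <= `|x - K x|) ->
  (forall x, `|K' x - K x| <= c / 2 * `|x|) -> Nt 0 = 0 ->
  (forall u, S u -> Nt (L0 u + P (L1 u)) = u - K' u) ->
  forall w, S w -> L0 w + P (L1 w) = 0 -> w = 0.
Proof.
move=> c0 hK hK' Nt0 hNt w Sw Tw0.
have c2 : 0 < c - c / 2 by lra.
have := bounded_below_perturbation (hK w) (hK' w).
by rewrite -(hNt w Sw) Tw0 Nt0 normr0 pmulr_rle0 // normr_le0 => /eqP.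
Qed.

Lemma truncation_maps_range {PV : V -> V} {PW : W -> W} :
  (forall x, L0 (PV x) = PW (L0 x)) -> linear PW ->
  forall x, range PV x -> range PW (L0 x + PW (L1 x)).
Proof.
move=> L0P lPW _ [a _ <-]; rewrite L0P.
by apply: (lin_subspaceD (lin_subspace_range lPW)); [exists (L0 a) | exists (L1 (PV a))].
Qed.

Lemma truncation_bij {S : set V} {T : set W} {m : nat} {b : 'I_m -> V}
  {b' : 'I_m -> W} {P : W -> W} {Nt : W -> V} {K K' : V -> V} {c : R} :
  Defs.basis_of S b -> Defs.basis_of T b' -> linear P ->
  (forall x, S x -> T (L0 x + P (L1 x))) ->
  0 < c -> (forall x, c * `|x| <= `|x - K x|) ->
  (forall x, `|K' x - K x| <= c / 2 * `|x|) -> Nt 0 = 0 ->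
  (forall u, S u -> Nt (L0 u + P (L1 u)) = u - K' u) ->
  bij_between (fun u => L0 u + P (L1 u)) S T.
Proof.
move=> hb hb' lP mapsB c0 hK hK' Nt0 hNt.
have lB := truncation_linear lP.
have injB : forall x y, S x -> S y -> L0 x + P (L1 x) = L0 y + P (L1 y) -> x = y.
  apply: (linear_inj_on (basis_of_lin_subspace hb) lB).
  exact: truncation_kernel_trivial c0 hK hK' Nt0 hNt.
by split=> // y; apply: (linear_inj_surj hb lB injB hb' mapsB).
Qed.

Lemma discrete_solutions_sub {P I : W -> W} {f : W} {uN v : V} :
  linear P -> linear I -> L0 uN + P (L1 uN) = P f -> L0 v + I (L1 v) = I f ->
  L0 (v - uN) + I (L1 (v - uN)) = I (f - L1 uN) - P (f - L1 uN).
Proof.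
move=> lP lI huN hv.
rewrite (linB lL0) (linB lL1) (linB lI) addrACA -opprD hv (linB lP) (linB lI).
by rewrite -huN addrK opprD addrA addrAC.
Qed.

Lemma discrete_solutions_dist_le {S : set V} {T : set W} {m : nat} {b : 'I_m -> V}
  {P I : W -> W} : Defs.basis_of S b -> linear P -> linear I ->
  (forall x, S x -> T (L0 x + I (L1 x))) ->
  (forall x y, S x -> S y -> L0 x + I (L1 x) = L0 y + I (L1 y) -> x = y) ->
  forall f uN v, S uN -> L0 uN + P (L1 uN) = P f ->
    S v -> L0 v + I (L1 v) = I f ->
    `|uN - v| <= inv_opnorm (fun u => L0 u + I (L1 u)) S T *
                 `|I (f - L1 uN) - P (f - L1 uN)|.
Proof.
move=> hb lP lI mapsA injA f uN v SuN huN Sv hv.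
have [C hC] := linear_inj_bounded_below hb (truncation_linear lI) injA.
have Svu : S (v - uN) := lin_subspaceB (basis_of_lin_subspace hb) Sv SuN.
rewrite distrC -(discrete_solutions_sub lP lI huN hv).
exact: norm_le_inv_opnorm hC Svu (mapsA _ Svu).
Qed.

End Truncation.

Theorem theoremt (R : realType) (V W : completeNormedModType R)
  (PV : nat -> V -> V) (PW : nat -> W -> W)
  (L L0 L1 : V -> W) (Nr N0 N1 : W -> V)
  (N1N : nat -> W -> V) (KN : nat -> V -> V) (K : V -> V)
  (W' : set W) (IW : nat -> W -> W) :
  separable V -> separable W ->
  fd_proj_family PV -> fd_proj_family PW ->
  (* L admissible, invertible, with invertible left-Fredholm regulator Nr *)
  admissible PV PW L L0 L1 Nr N0 N1 ->
  bounded_linear L -> bij_between L setT setT ->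
  bounded_linear Nr -> bij_between Nr setT setT ->
  compact_op K -> (forall x, Nr (L x) = x - K x) ->
  (* the truncated regulators *)
  (forall n, linear (N1N n) /\
     (forall y, range (PW n) y -> range (PV n) (N1N n y))) ->
  (forall n, bounded_linear (KN n)) ->
  (forall n u, range (PV n) u ->
     N0 (L0 u + PW n (L1 u)) + N1N n (L0 u + PW n (L1 u)) = u - KN n u) ->
  (fun n => opnorm_on setT (fun x => KN n x - K x)) @ \oo --> (0 : R) ->
  (forall n, same_dim (range (PV n)) (range (PW n))) ->
  (* the dense subspace W' and the projections IW *)
  lin_subspace W' -> dense W' ->
  (forall n, linear (IW n)) ->
  (forall n u, W' u -> IW n (IW n u) = IW n u) ->
  (forall u, W' u -> (fun n => `|u - IW n u|) @ \oo --> (0 : R)) ->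
  (forall n, IW n @` W' = range (PW n)) ->
  (* invertibility for sufficiently large N *)
  (exists M, forall n, (M <= n)%N ->
     bij_between (fun u => L0 u + IW n (L1 u)) (range (PV n)) (range (PW n))) ->
  exists M, forall n, (M <= n)%N ->
    bij_between (fun u => L0 u + PW n (L1 u)) (range (PV n)) (range (PW n)) /\
    (bij_between (fun u => L0 u + IW n (L1 u)) (range (PV n)) (range (PW n)) ->
     forall f, W' f ->
     forall uN v, range (PV n) uN -> L0 uN + PW n (L1 uN) = PW n f ->
       range (PV n) v -> L0 v + IW n (L1 v) = IW n f ->
       `|uN - v| <=
         inv_opnorm (fun u => L0 u + IW n (L1 u)) (range (PV n)) (IW n @` W') *
         `|IW n (f - L1 uN) - PW n (f - L1 uN)|).
Proof.
move=> _ _ _ fdPW [[lL0 lL1 _ L0PV] [_ [lN0 _ _ _]]] bL [_ _ injL] bNr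
  [_ _ injNr] cK NrL N1Nh KNb KNeq KNcvg samed _ _ lIW _ _ IWrange _.
have [c c0 hc] : exists2 c, 0 < c & forall x, c * `|x| <= `|x - K x|.
  apply: compact_op_bounded_below => // x hx; apply: injL => //; apply: injNr => //.
  by rewrite NrL hx (lin0 bL.1) (lin0 bNr.1).
have [M _ HM] := (fcvgrPdist_lt _).1 KNcvg (c / 2) (divr_gt0 c0 (ltr0Sn _ 1)).
exists M => n /HM /=; rewrite sub0r normrN => KNK.
have [[lPW _] _ _ _] := fdPW n.
have [m [b [b' [hb hb']]]] := samed n.
have KNK_le x : `|KN n x - K x| <= c / 2 * `|x|.
  have [lD cD] := bounded_linear_subfun (KNb n) cK.1.
  apply: (le_trans (opnorm_on_setT_le lD cD x)).
  by rewrite ler_wpM2r // ltW // (le_lt_trans (ler_norm _)).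
have Nt0 : N0 0 + N1N n 0 = 0 by rewrite (lin0 lN0) (lin0 (N1Nh n).1) addr0.
split; first exact: (truncation_bij (Nt := fun y => N0 y + N1N n y) lL0 lL1
  hb hb' lPW (truncation_maps_range (L0PV n) lPW) c0 hc KNK_le Nt0 (KNeq n)).
move=> [mapsA _ injA] f _ uN v; rewrite IWrange.
exact: (discrete_solutions_dist_le lL0 lL1 hb lPW (lIW n) mapsA injA).
Qed.
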